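(* Let $n\ge 1$ and let $H$ be a maximal subgroup of the semigroup $M_n(\mathbb{FT})$. Then $H$ is isomorphic (as a group) to a direct product $\mathbb{R}\times\Sigma$ for some subgroup $\Sigma$ of the symmetric group $S_n$ (here $\mathbb{R}$ denotes the additive group of real numbers).
   Context: $\mathbb{FT}$ denotes the set $\mathbb{R}$ with operations $a\oplus b=\max(a,b)$ and $a\otimes b=a+b$. $M_n(\mathbb{FT})$ is the set of $n\times n$ matrices with real entries, which is a semigroup under tropical matrix multiplication $(A\otimes B)_{i,j}=\max_{k}(A_{i,k}+B_{k,j})$. A maximal subgroup of a semigroup is a subgroup (a subset which is a group under the semigroup operation, possibly with identity different from any identity of the semigroup) not properly contained in any other subgroup. *)

From Stdlib Require Import Rdefinitions.
From HB Require Import structures.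
From mathcomp Require Import all_boot all_order all_algebra all_fingroup.
From mathcomp Require Import Rstruct.
Set Implicit Arguments. Unset Strict Implicit. Unset Printing Implicit Defensive.
Import Order.TTheory GRing.Theory Num.Theory.
Local Open Scope ring_scope.

(* The max over the (nonempty for
   n >= 1) list of values s is computed as a fold of Num.max seeded with the
   head of s; for n = 0 the matrix type is trivial anyway. *)
Definition trop_mul (n : nat) (A B : 'M[R]_n) : 'M[R]_n :=
  \matrix_(i, j)
    (let s := [seq A i k + B k j | k : 'I_n] in
     \big[Num.max/head 0 s]_(x <- s) x).

Definition is_trop_subgroup (n : nat) (H : 'M[R]_n -> Prop) : Prop :=
  (forall x y, H x -> H y -> H (trop_mul x y)) /\
  exists e, H e /\
    (forall x, H x -> trop_mul e x = x /\ trop_mul x e = x) /\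
    (forall x, H x -> exists y, H y /\ trop_mul x y = e /\ trop_mul y x = e).

Definition is_maximal_trop_subgroup (n : nat) (H : 'M[R]_n -> Prop) : Prop :=
  is_trop_subgroup H /\
  forall K : 'M[R]_n -> Prop, is_trop_subgroup K ->
    (forall x, H x -> K x) -> forall x, K x -> H x.

From Stdlib Require Import Rdefinitions ClassicalEpsilon.
From mathcomp Require Import all_boot all_order all_algebra all_fingroup.
From mathcomp Require Import Rstruct lra.
Set Implicit Arguments. Unset Strict Implicit. Unset Printing Implicit Defensive.
Import Order.TTheory GRing.Theory Num.Theory.
Local Open Scope ring_scope.

(* Let E be the identity of H. Every x in H is a unit of the corner semigroup
   E M E, and such a unit permutes the critical components of E (indices with
   E i i = 0, two of them equivalent when E i j + E j i = 0): the component of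
   i goes to that of a column k with x i k + x^-1 k i = 0.  Summing the
   entries x i (sigma i) over one representative per component gives an
   additive weight, and x |-> (weight / #components, sigma) is a morphism.
   Its kernel is trivial: a kernel element has a constant critical diagonal
   (compare its powers, using that R is archimedean), hence a zero one, and is
   then squeezed between E and its inverse.  Maximality makes H closed under
   adding real scalars, which shifts the weight freely, so the image is
   R x Sigma. *)

Section TropicalProduct.
Variable n : nat.
Implicit Types (A B C : 'M[R]_n) (r : R).

Lemma trop_mul_ge A B i j k : A i k + B k j <= trop_mul A B i j.
Proof.
rewrite mxE /image_mem big_map.
by apply: (@le_bigmax_seq _ _ _ _ _ k xpredT); rewrite ?mem_enum.
Qed.

Lemma trop_mul_le A B i j v :
  (forall k, A i k + B k j <= v) -> trop_mul A B i j <= v.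
Proof.
move=> le_v; rewrite mxE /image_mem big_map; apply: bigmax_le => [|k _]; last exact: le_v.
have : i \in enum 'I_n by rewrite mem_enum.
by case: (enum 'I_n) => // k s _; apply: le_v.
Qed.

Lemma trop_mul_attained A B i j : exists k, trop_mul A B i j = A i k + B k j.
Proof.
exists [arg max_(k > i) (A i k + B k j)]%O; apply: le_anti.
rewrite trop_mul_ge andbT; apply: trop_mul_le => k.
by case: arg_maxP => // l _; apply.
Qed.

Lemma trop_mulA A B C : trop_mul (trop_mul A B) C = trop_mul A (trop_mul B C).
Proof.
apply/matrixP => i j; apply: le_anti; apply/andP; split.
- apply: trop_mul_le => l; have [k ->] := trop_mul_attained A B i l.
  by rewrite -addrA; apply: le_trans (trop_mul_ge _ _ i j k); rewrite lerD2l trop_mul_ge.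
- apply: trop_mul_le => k; have [l ->] := trop_mul_attained B C k j.
  by rewrite addrA; apply: le_trans (trop_mul_ge _ _ i j l); rewrite lerD2r trop_mul_ge.
Qed.

Lemma trop_mul_monor A B C i j :
  (forall k l, B k l <= C k l) -> trop_mul A B i j <= trop_mul A C i j.
Proof.
move=> leBC; apply: trop_mul_le => k.
by apply: le_trans (trop_mul_ge _ _ i j k); rewrite lerD2l.
Qed.

Definition trop_scale r A : 'M[R]_n := \matrix_(i, j) (r + A i j).
(* Arguments of type R are otherwise read in R_scope, where - is Ropp. *)
Arguments trop_scale r%_ring_scope A.

Lemma trop_mul_scalel r A B : trop_mul (trop_scale r A) B = trop_scale r (trop_mul A B).
Proof.
apply/matrixP => i j; rewrite [RHS]mxE; apply: le_anti; apply/andP; split.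
- by apply: trop_mul_le => k; rewrite mxE -addrA lerD2l trop_mul_ge.
- have [k ->] := trop_mul_attained A B i j.
  by apply: le_trans (trop_mul_ge _ _ i j k); rewrite mxE addrA.
Qed.

Lemma trop_mul_scaler r A B : trop_mul A (trop_scale r B) = trop_scale r (trop_mul A B).
Proof.
apply/matrixP => i j; rewrite [RHS]mxE; apply: le_anti; apply/andP; split.
- by apply: trop_mul_le => k; rewrite mxE addrCA lerD2l trop_mul_ge.
- have [k ->] := trop_mul_attained A B i j.
  by apply: le_trans (trop_mul_ge _ _ i j k); rewrite mxE addrCA.
Qed.

Lemma trop_scaleA r s A : trop_scale r (trop_scale s A) = trop_scale (r + s) A.
Proof. by apply/matrixP => i j; rewrite !mxE addrA. Qed.

Lemma trop_scale0 A : trop_scale 0 A = A.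
Proof. by apply/matrixP => i j; rewrite mxE add0r. Qed.

Lemma trop_scaleKN r A : trop_scale r (trop_scale (- r) A) = A.
Proof. by rewrite trop_scaleA addrN trop_scale0. Qed.

Lemma trop_scaleNK r A : trop_scale (- r) (trop_scale r A) = A.
Proof. by rewrite trop_scaleA addNr trop_scale0. Qed.

End TropicalProduct.

(* For idempotent E these are the nodes and the components of the critical
   graph, whose cycles have weight 0. *)
Definition critical n (E : 'M[R]_n) (i : 'I_n) := E i i == 0.

Definition crit_equiv n (E : 'M[R]_n) (i j : 'I_n) :=
  [&& critical E i, critical E j & E i j + E j i == 0].

Definition crit_rep n (E : 'M[R]_n) (i : 'I_n) : 'I_n :=
  odflt i [pick j | crit_equiv E i j].

Definition is_crit_rep n (E : 'M[R]_n) (i : 'I_n) :=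
  critical E i && (crit_rep E i == i).

Lemma is_crit_rep_critical n (E : 'M[R]_n) i : is_crit_rep E i -> critical E i.
Proof. by case/andP. Qed.

Lemma crit_equiv_sym n (E : 'M[R]_n) i j : crit_equiv E i j -> crit_equiv E j i.
Proof. by case/and3P=> ci cj cij; rewrite /crit_equiv ci cj addrC. Qed.

Lemma crit_equiv_refl n (E : 'M[R]_n) i : critical E i -> crit_equiv E i i.
Proof. by move=> ci; rewrite /crit_equiv ci (eqP ci) addr0 eqxx. Qed.

Lemma crit_equiv_rep n (E : 'M[R]_n) i : critical E i -> crit_equiv E i (crit_rep E i).
Proof.
by move=> ci; rewrite /crit_rep; case: pickP => [//|/(_ i)]; rewrite crit_equiv_refl.
Qed.

Section Idempotent.
Variables (n : nat) (E : 'M[R]_n).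
Hypothesis idemE : trop_mul E E = E.

Lemma idem_le i j k : E i k + E k j <= E i j.
Proof. by have := trop_mul_ge E E i j k; rewrite idemE. Qed.

Lemma idem_diag_le0 i : E i i <= 0.
Proof. by have := idem_le i i i; rewrite -lerBrDr subrr. Qed.

Lemma idem_cycle_le0 i j : E i j + E j i <= 0.
Proof. by apply: le_trans (idem_diag_le0 i); apply: idem_le. Qed.

Lemma crit_equiv_trans i j k :
  crit_equiv E i j -> crit_equiv E j k -> crit_equiv E i k.
Proof.
case/and3P=> ci _ /eqP cij /and3P[_ ck /eqP cjk]; rewrite /crit_equiv ci ck /=.
have := idem_le i k j; have := idem_le k i j; have := idem_cycle_le0 i k.
by move=> *; apply/eqP; lra.
Qed.

Lemma crit_rep_eq i j : crit_equiv E i j -> crit_rep E i = crit_rep E j.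
Proof.
move=> eqij; have same : crit_equiv E i =1 crit_equiv E j.
  move=> k; apply/idP/idP; last exact: crit_equiv_trans.
  exact: crit_equiv_trans (crit_equiv_sym eqij).
by rewrite /crit_rep (eq_pick same); case: pickP => // /(_ j); rewrite -same eqij.
Qed.

Lemma is_crit_rep_rep i : critical E i -> is_crit_rep E (crit_rep E i).
Proof.
move=> ci; have /and3P[_ cr _] := crit_equiv_rep ci.
by rewrite /is_crit_rep cr -(crit_rep_eq (crit_equiv_rep ci)) /=.
Qed.

Lemma is_crit_rep_eq i j :
  is_crit_rep E i -> is_crit_rep E j -> crit_equiv E i j -> i = j.
Proof.
by case/andP=> _ /eqP {2}<- /andP[_ /eqP {2}<-]; apply: crit_rep_eq.
Qed.

(* Iterating u |-> an optimal intermediate node between u and j must revisit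
   a node, and the revisited node lies on a cycle of weight 0. *)
Lemma idem_factor_critical l j :
  exists2 k, critical E k & E l j = E l k + E k j.
Proof.
pose f u := odflt u [pick k | E u j == E u k + E k j].
have fP u : E u j = E u (f u) + E (f u) j.
  rewrite /f; case: pickP => [k /eqP //|none].
  have [k ek] := trop_mul_attained E E u j.
  by move: (none k); rewrite -ek idemE eqxx.
have iterP t u : E u j = E u (iter t.+1 f u) + E (iter t.+1 f u) j.
  elim: t u => [|t IHt] u; first exact: fP.
  rewrite iterS; set w := iter t.+1 f u.
  have := IHt u; have := fP w; have := idem_le u (f w) w; have := idem_le u j (f w).
  by rewrite -/w; lra.
have /injectivePn[a [b neq_ab eq_ab]] :
    ~~ injectiveb (fun t : 'I_n.+1 => iter t f l).
  by apply/negP => /injectiveP/leq_card; rewrite !card_ord ltnn.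
wlog lt_ab : a b neq_ab eq_ab / (a < b)%N.
  move=> gen; case: (ltngtP a b) => [|lt_ba|/val_inj eq_ab']; first exact: gen.
  - by apply: (gen b a); rewrite // eq_sym.
  - by rewrite eq_ab' eqxx in neq_ab.
set v := iter a f l; have loop_v : iter (b - a).-1.+1 f v = v.
  by rewrite prednK ?subn_gt0 // /v -iterD subnK ?(ltnW lt_ab).
exists v.
  by apply/eqP; have := iterP (b - a).-1 v; rewrite loop_v; lra.
by have := iterP b.-1 l; rewrite prednK ?(leq_ltn_trans _ lt_ab) // -eq_ab.
Qed.

Lemma exists_is_crit_rep (i0 : 'I_n) : exists i, is_crit_rep E i.
Proof.
have [k ck _] := idem_factor_critical i0 i0.
by exists (crit_rep E k); apply: is_crit_rep_rep.
Qed.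

End Idempotent.

Definition trop_unit n (E A B : 'M[R]_n) :=
  [/\ trop_mul A B = E, trop_mul B A = E, trop_mul E A = A & trop_mul E B = B].

Lemma trop_unit_id n (E : 'M[R]_n) : trop_mul E E = E -> trop_unit E E E.
Proof. by move=> idemE; split. Qed.

Lemma trop_unit_idem n (E A B : 'M[R]_n) :
  trop_unit E A B -> trop_mul E E = E.
Proof. by case=> AB _ EA _; rewrite -{2}AB -trop_mulA EA. Qed.

Lemma trop_unit_mul_idr n (E A B : 'M[R]_n) :
  trop_unit E A B -> trop_mul A E = A.
Proof. by case=> AB BA EA _; rewrite -BA -trop_mulA AB. Qed.

Lemma trop_unit_sym n (E A B : 'M[R]_n) : trop_unit E A B -> trop_unit E B A.
Proof. by case. Qed.

Lemma trop_unit_mul n (E A B A' B' : 'M[R]_n) :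
  trop_unit E A B -> trop_unit E A' B' ->
  trop_unit E (trop_mul A A') (trop_mul B' B).
Proof.
move=> [AB BA EA EB] [AB' BA' EA' EB']; split.
- by rewrite trop_mulA -(trop_mulA A') AB' EB AB.
- by rewrite trop_mulA -(trop_mulA B) BA EA' BA'.
- by rewrite -trop_mulA EA.
- by rewrite -trop_mulA EB'.
Qed.

Lemma trop_unit_scale n (E A B : 'M[R]_n) r :
  trop_unit E A B -> trop_unit E (trop_scale r A) (trop_scale (- r) B).
Proof.
case=> AB BA EA EB; split; rewrite ?trop_mul_scalel ?trop_mul_scaler;
  by rewrite ?AB ?BA ?EA ?EB ?trop_scaleKN ?trop_scaleNK.
Qed.

(* For a unit A with inverse B and critical i, the columns k with
   [matched A B i k] form one critical component. *)
Definition matched n (A B : 'M[R]_n) (i k : 'I_n) := A i k + B k i == 0.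

Section Unit.
Variables (n : nat) (E A B : 'M[R]_n).
Hypothesis unitAB : trop_unit E A B.

Let mulAB : trop_mul A B = E. Proof. by case: unitAB. Qed.
Let mulBA : trop_mul B A = E. Proof. by case: unitAB. Qed.
Let mulEA : trop_mul E A = A. Proof. by case: unitAB. Qed.
Let mulEB : trop_mul E B = B. Proof. by case: unitAB. Qed.
Let mulAE : trop_mul A E = A. Proof. exact: trop_unit_mul_idr unitAB. Qed.
Let mulBE : trop_mul B E = B.
Proof. exact: trop_unit_mul_idr (trop_unit_sym unitAB). Qed.
Let idemE : trop_mul E E = E. Proof. exact: trop_unit_idem unitAB. Qed.

Lemma unit_diag_bound i j : A j j + E i j + E j i <= A i i.
Proof.
have := trop_mul_ge A E i i j; have := trop_mul_ge E A i j j.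
by rewrite mulAE mulEA; lra.
Qed.

Lemma matched_critical i k : matched A B i k -> critical E i /\ critical E k.
Proof.
move/eqP=> mik; have := trop_mul_ge A B i i k; have := trop_mul_ge B A k k i.
rewrite mulAB mulBA; have := idem_diag_le0 idemE i; have := idem_diag_le0 idemE k.
by move=> *; split; apply/eqP; lra.
Qed.

Lemma exists_matched i : critical E i -> exists k, matched A B i k.
Proof.
move/eqP=> ci; have [k ek] := trop_mul_attained A B i i.
by exists k; rewrite /matched -ek mulAB ci.
Qed.

Lemma matched_equivr i k k' :
  matched A B i k -> crit_equiv E k k' -> matched A B i k'.
Proof.
move=> mik /and3P[_ _ /eqP ekk']; have [/eqP ci _] := matched_critical mik.
have := trop_mul_ge A E i k' k; have := trop_mul_ge E B k' i k.
have := trop_mul_ge A B i i k'; rewrite mulAE mulEB mulAB ci.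
by move: mik => /eqP mik *; apply/eqP; lra.
Qed.

Lemma matched_equivl i i' k :
  matched A B i k -> crit_equiv E i i' -> matched A B i' k.
Proof.
move=> mik /and3P[_ /eqP ci' /eqP eii'].
have := trop_mul_ge E A i' k i; have := trop_mul_ge B E k i' i.
have := trop_mul_ge A B i' i' k; rewrite mulEA mulBE mulAB ci'.
by move: mik => /eqP mik *; apply/eqP; lra.
Qed.

Lemma matched_uniqr i k k' :
  matched A B i k -> matched A B i k' -> crit_equiv E k k'.
Proof.
move=> mik mik'; have [_ ck] := matched_critical mik.
have [_ ck'] := matched_critical mik'; rewrite /crit_equiv ck ck'.
have := trop_mul_ge B A k k' i; have := trop_mul_ge B A k' k i.
rewrite mulBA; have := idem_cycle_le0 idemE k k'.
by move: mik mik' => /eqP mik /eqP mik' *; apply/eqP; lra.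
Qed.

Lemma matched_uniql i i' k :
  matched A B i k -> matched A B i' k -> crit_equiv E i i'.
Proof.
move=> mik mi'k; have [ci _] := matched_critical mik.
have [ci' _] := matched_critical mi'k; rewrite /crit_equiv ci ci'.
have := trop_mul_ge A B i i' k; have := trop_mul_ge A B i' i k.
rewrite mulAB; have := idem_cycle_le0 idemE i i'.
by move: mik mi'k => /eqP mik /eqP mi'k *; apply/eqP; lra.
Qed.

Lemma matched_col i k l : matched A B i k -> A l k = E l i + A i k.
Proof.
move/eqP=> mik; have := trop_mul_ge E A l k i; have := trop_mul_ge A B l i k.
by rewrite mulEA mulAB; lra.
Qed.

Lemma matched_mul A' B' i s t :
  trop_unit E A' B' -> matched A B i s -> matched A' B' s t ->
  matched (trop_mul A A') (trop_mul B' B) i t /\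
  trop_mul A A' i t = A i s + A' s t.
Proof.
move=> unitAB' mis mst; have [/eqP ci _] := matched_critical mis.
have [AAB _ _ _] := trop_unit_mul unitAB unitAB'.
have := trop_mul_ge A A' i t s; have := trop_mul_ge B' B t i s.
have := trop_mul_ge (trop_mul A A') (trop_mul B' B) i i t; rewrite AAB ci.
by move: mis mst => /eqP mis /eqP mst *; split; first apply/eqP; lra.
Qed.

Lemma idem_le_unit : (forall k, critical E k -> matched A B k k /\ A k k = 0) ->
  forall l j, E l j <= A l j.
Proof.
move=> diag0 l j; have [k ck ->] := idem_factor_critical idemE l j.
have [mkk Akk] := diag0 k ck.
by have := trop_mul_ge A E l j k; rewrite mulAE (matched_col l mkk) Akk addr0.
Qed.

Lemma unit_eq_idem : (forall l j, E l j <= A l j) -> (forall l j, E l j <= B l j) ->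
  A = E.
Proof.
move=> geA geB; apply/matrixP => l j; apply: le_anti; rewrite geA andbT.
by have := trop_mul_monor A l j geB; rewrite mulAE mulAB.
Qed.

End Unit.

(* The permutation of components induced by a unit, acting on the
   representatives [crit_rep] and fixing every other index.  [crit_perm] is
   found by search, so that its definition needs no injectivity proof. *)
Definition crit_map n (E A B : 'M[R]_n) (i : 'I_n) : 'I_n :=
  if is_crit_rep E i then crit_rep E (odflt i [pick k | matched A B i k]) else i.

Definition crit_perm n (E A B : 'M[R]_n) : {perm 'I_n} :=
  odflt 1%g [pick s : {perm 'I_n} | [forall i, s i == crit_map E A B i]].

Definition crit_weight n (E A B : 'M[R]_n) :=
  \sum_(i | is_crit_rep E i) A i (crit_perm E A B i).

Lemma crit_perm_nonrep n (E A B : 'M[R]_n) i :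
  ~~ is_crit_rep E i -> crit_perm E A B i = i.
Proof.
move/negbTE=> nri; rewrite /crit_perm.
by case: pickP => [s /forallP/(_ i)/eqP ->|_]; rewrite ?perm1 // /crit_map nri.
Qed.

Section UnitPermutation.
Variables (n : nat) (E A B : 'M[R]_n).
Hypothesis unitAB : trop_unit E A B.

Let idemE : trop_mul E E = E. Proof. exact: trop_unit_idem unitAB. Qed.

Lemma crit_map_rep i : is_crit_rep E i ->
  is_crit_rep E (crit_map E A B i) /\ matched A B i (crit_map E A B i).
Proof.
move=> ri; rewrite /crit_map ri; case: pickP => [k mik|none] /=.
  have [_ ck] := matched_critical unitAB mik.
  have := matched_equivr unitAB mik (crit_equiv_rep ck).
  by have := is_crit_rep_rep idemE ck.
have [k mik] := exists_matched unitAB (is_crit_rep_critical ri).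
by move: (none k); rewrite mik.
Qed.

Lemma crit_map_eq i k : is_crit_rep E i -> is_crit_rep E k ->
  matched A B i k -> crit_map E A B i = k.
Proof.
move=> ri rk mik; have [rmi mimi] := crit_map_rep ri.
exact: (is_crit_rep_eq idemE rmi rk (matched_uniqr unitAB mimi mik)).
Qed.

Lemma crit_map_inj : injective (crit_map E A B).
Proof.
move=> i j; rewrite /crit_map.
case ri: (is_crit_rep E i); case rj: (is_crit_rep E j) => /= eq_ij.
- have [_ mi] := crit_map_rep ri; have [_ mj] := crit_map_rep rj.
  rewrite /crit_map ri rj eq_ij in mi mj.
  exact: (is_crit_rep_eq idemE ri rj (matched_uniql unitAB mi mj)).
- by have [] := crit_map_rep ri; rewrite /crit_map ri eq_ij rj.
- by have [] := crit_map_rep rj; rewrite /crit_map rj -eq_ij ri.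
- exact: eq_ij.
Qed.

Lemma crit_permE i : crit_perm E A B i = crit_map E A B i.
Proof.
rewrite /crit_perm; case: pickP => [s /forallP/(_ i)/eqP //|none].
by have /negbT/forallPn[j] := none (perm crit_map_inj); rewrite permE eqxx.
Qed.

Lemma is_crit_rep_perm i : is_crit_rep E (crit_perm E A B i) = is_crit_rep E i.
Proof.
have [ri|nri] := boolP (is_crit_rep E i).
  by rewrite crit_permE; have [] := crit_map_rep ri.
by rewrite crit_perm_nonrep // (negbTE nri).
Qed.

Lemma matched_perm i : is_crit_rep E i -> matched A B i (crit_perm E A B i).
Proof. by move=> ri; rewrite crit_permE; have [] := crit_map_rep ri. Qed.

End UnitPermutation.

Section UnitProduct.
Variables (n : nat) (E A B A' B' : 'M[R]_n).
Hypotheses (unitAB : trop_unit E A B) (unitAB' : trop_unit E A' B').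

Lemma crit_perm_mul : crit_perm E (trop_mul A A') (trop_mul B' B) =
  (crit_perm E A B * crit_perm E A' B')%g.
Proof.
have unitAA' := trop_unit_mul unitAB unitAB'.
apply/permP => i; rewrite permM.
have [ri|nri] := boolP (is_crit_rep E i); last by rewrite !crit_perm_nonrep.
have ri' : is_crit_rep E (crit_perm E A B i) by rewrite (is_crit_rep_perm unitAB).
rewrite (crit_permE unitAA'); apply: (crit_map_eq unitAA' ri).
  by rewrite (is_crit_rep_perm unitAB').
have mAi := matched_perm unitAB ri; have mA'i := matched_perm unitAB' ri'.
by have [] := matched_mul unitAB unitAB' mAi mA'i.
Qed.

Lemma crit_weight_mul : crit_weight E (trop_mul A A') (trop_mul B' B) =
  crit_weight E A B + crit_weight E A' B'.
Proof.
pose sA := crit_perm E A B.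
have reindex : crit_weight E A' B' =
    \sum_(i | is_crit_rep E i) A' (sA i) (crit_perm E A' B' (sA i)).
  rewrite /crit_weight (reindex_inj (@perm_inj _ sA)) /=.
  by apply: eq_bigl => i; rewrite (is_crit_rep_perm unitAB).
rewrite reindex /crit_weight -big_split; apply: eq_bigr => i ri.
have ri' : is_crit_rep E (sA i) by rewrite (is_crit_rep_perm unitAB).
rewrite crit_perm_mul permM.
have mAi := matched_perm unitAB ri; have mA'i := matched_perm unitAB' ri'.
by have [] := matched_mul unitAB unitAB' mAi mA'i.
Qed.

End UnitProduct.

Lemma crit_perm_scale n (E A B : 'M[R]_n) r :
  crit_perm E (trop_scale r A) (trop_scale (- r) B) = crit_perm E A B.
Proof.
have same : matched (trop_scale r A) (trop_scale (- r) B) =2 matched A B.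
  by move=> i k; rewrite /matched !mxE addrACA addrN add0r.
rewrite /crit_perm /crit_map.
by under eq_pick do under eq_forallb do rewrite (eq_pick (same _)).
Qed.

Lemma crit_weight_scale n (E A B : 'M[R]_n) r :
  crit_weight E (trop_scale r A) (trop_scale (- r) B) =
  crit_weight E A B + r *+ #|is_crit_rep E|.
Proof.
rewrite /crit_weight crit_perm_scale -sumr_const -big_split /=.
by apply: eq_bigr => i _; rewrite mxE addrC.
Qed.

Lemma crit_perm_id n (E : 'M[R]_n) : trop_mul E E = E -> crit_perm E E E = 1%g.
Proof.
move=> idemE; apply/permP => i; rewrite perm1.
have [ri|nri] := boolP (is_crit_rep E i); last by rewrite crit_perm_nonrep.
rewrite (crit_permE (trop_unit_id idemE)); apply: (crit_map_eq (trop_unit_id idemE)) => //.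
by rewrite /matched (eqP (is_crit_rep_critical ri)) addr0 eqxx.
Qed.

Lemma crit_weight_id n (E : 'M[R]_n) : trop_mul E E = E -> crit_weight E E E = 0.
Proof.
move=> idemE; rewrite /crit_weight crit_perm_id //; apply: big1 => i ri.
by rewrite perm1 (eqP (is_crit_rep_critical ri)).
Qed.

Section UnitPowers.
Variables (n : nat) (E A B : 'M[R]_n).
Hypotheses (unitAB : trop_unit E A B)
           (matched_diag : forall i, critical E i -> matched A B i i).

Lemma exists_unit_pow k : exists X Y, trop_unit E X Y /\
  forall i, critical E i -> matched X Y i i /\ X i i = k.+1%:R * A i i.
Proof.
elim: k => [|k [X [Y [unitXY XY]]]].
  by exists A, B; split=> // i ci; rewrite mul1r; split; first exact: matched_diag.
exists (trop_mul X A), (trop_mul B Y); split; first exact: trop_unit_mul.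
move=> i ci; have [mXii Xii] := XY i ci.
have [-> ->] := matched_mul unitXY unitAB mXii (matched_diag ci).
by rewrite Xii -[k.+2]addn1 natrD mulrDl mul1r.
Qed.

(* The k-th powers satisfy k (A j j - A i i) <= - (E i j + E j i), which
   forces A j j <= A i i since R is archimedean. *)
Lemma crit_diag_le i j : critical E i -> critical E j -> A j j <= A i i.
Proof.
move=> ci cj; rewrite leNgt; apply/negP => lt_ij.
set d := A j j - A i i; have d_gt0 : 0 < d by rewrite subr_gt0.
set c := - (E i j + E j i).
have c_ge0 : 0 <= c by rewrite oppr_ge0 (idem_cycle_le0 (trop_unit_idem unitAB)).
have := archi_boundP (divr_ge0 c_ge0 (ltW d_gt0)); rewrite ltr_pdivrMr //.
have [X [Y [unitXY XY]]] := exists_unit_pow (Num.bound (c / d)).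
have := unit_diag_bound unitXY i j; rewrite (XY i ci).2 (XY j cj).2.
rewrite -addn1 natrD !mulrDl !mul1r /d mulrBr /c.
by lra.
Qed.

Lemma crit_diag_eq i j : critical E i -> critical E j -> A i i = A j j.
Proof. by move=> ci cj; apply: le_anti; rewrite !crit_diag_le. Qed.

Lemma crit_diag_eq0 (i0 : 'I_n) : \sum_(i | is_crit_rep E i) A i i = 0 ->
  forall i, critical E i -> A i i = 0.
Proof.
move=> sum0 i ci; have idemE := trop_unit_idem unitAB.
have [i1 ri1] := exists_is_crit_rep idemE i0; have ci1 := is_crit_rep_critical ri1.
have reps_gt0 : (0 < #|is_crit_rep E|)%N by apply/card_gt0P; exists i1.
have : A i1 i1 *+ #|is_crit_rep E| = 0.
  rewrite -[RHS]sum0 -sumr_const; apply: eq_big => // k rk.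
  by rewrite (crit_diag_eq (is_crit_rep_critical rk) ci1).
by move/eqP; rewrite mulrn_eq0 gtn_eqF //= (crit_diag_eq ci ci1) => /eqP.
Qed.

End UnitPowers.

Lemma crit_perm1_matched n (E A B : 'M[R]_n) : trop_unit E A B ->
  crit_perm E A B = 1%g -> forall i, critical E i -> matched A B i i.
Proof.
move=> unitAB perm1AB i ci; have eq_ri := crit_equiv_sym (crit_equiv_rep ci).
have := matched_perm unitAB (is_crit_rep_rep (trop_unit_idem unitAB) ci).
rewrite perm1AB perm1 => mrr.
exact: (matched_equivr unitAB (matched_equivl unitAB mrr eq_ri) eq_ri).
Qed.

Lemma trop_unit_kernel n (E A B : 'M[R]_n) (i0 : 'I_n) :
  trop_unit E A B -> crit_perm E A B = 1%g -> crit_weight E A B = 0 -> A = E.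
Proof.
move=> unitAB perm1AB weight0AB; have mdiag := crit_perm1_matched unitAB perm1AB.
have A0 : forall i, critical E i -> A i i = 0.
  apply: (crit_diag_eq0 unitAB mdiag i0); rewrite -[RHS]weight0AB /crit_weight perm1AB.
  by apply: eq_bigr => i _; rewrite perm1.
have B0 k : critical E k -> B k k = 0.
  by move=> ck; have := mdiag k ck; rewrite /matched A0 // add0r => /eqP.
apply: (unit_eq_idem unitAB).
  by apply: (idem_le_unit unitAB) => k ck; rewrite A0 ?mdiag.
apply: (idem_le_unit (trop_unit_sym unitAB)) => k ck.
by rewrite /matched A0 ?B0 // addr0 eqxx.
Qed.

Section ShiftClosedSubgroup.
Variables (n : nat) (H : 'M[R]_n -> Prop) (E : 'M[R]_n) (inv : 'M[R]_n -> 'M[R]_n).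
Hypotheses (n_gt0 : (0 < n)%N) (HE : H E)
  (Hmul : forall x y, H x -> H y -> H (trop_mul x y))
  (Hid : forall x, H x -> trop_mul E x = x /\ trop_mul x E = x)
  (Hinv : forall x, H x ->
     H (inv x) /\ trop_mul x (inv x) = E /\ trop_mul (inv x) x = E)
  (Hscale : forall r x, H x -> H (trop_scale r x)).

Let HV x : H x -> H (inv x). Proof. by case/Hinv. Qed.

Let unit_inv x : H x -> trop_unit E x (inv x).
Proof.
move=> Hx; have [HVx [xV Vx]] := Hinv Hx.
by split; rewrite // ?(Hid Hx).1 ?(Hid HVx).1.
Qed.

Let idemE : trop_mul E E = E. Proof. exact: trop_unit_idem (unit_inv HE). Qed.

Let crit_reps_neq0 : #|is_crit_rep E|%:R != 0 :> R.
Proof.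
have [i ri] := exists_is_crit_rep idemE (Ordinal n_gt0).
by rewrite pnatr_eq0 -lt0n; apply/card_gt0P; exists i.
Qed.

Lemma inv_uniq x y : H x -> H y -> trop_mul y x = E -> inv x = y.
Proof.
move=> Hx Hy yx; have [xV _ _ EVx] := unit_inv Hx.
by rewrite -EVx -yx trop_mulA xV (trop_unit_mul_idr (unit_inv Hy)).
Qed.

Lemma inv_id : inv E = E.
Proof. exact: inv_uniq. Qed.

Lemma inv_mul x y : H x -> H y -> inv (trop_mul x y) = trop_mul (inv y) (inv x).
Proof.
move=> Hx Hy; apply: inv_uniq; [exact: Hmul | exact: Hmul (HV Hy) (HV Hx) |].
by have [_ ->] := trop_unit_mul (unit_inv Hx) (unit_inv Hy).
Qed.

Lemma inv_scale r x : H x -> inv (trop_scale r x) = trop_scale (- r) (inv x).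
Proof.
move=> Hx; apply: inv_uniq; [exact: Hscale | exact: Hscale (HV Hx) |].
by have [_ ->] := trop_unit_scale r (unit_inv Hx).
Qed.

Definition perm_part x := crit_perm E x (inv x).

Definition real_part x := crit_weight E x (inv x) / #|is_crit_rep E|%:R.

Lemma perm_part_mul x y : H x -> H y ->
  perm_part (trop_mul x y) = (perm_part x * perm_part y)%g.
Proof.
by move=> Hx Hy; rewrite /perm_part inv_mul // (crit_perm_mul (unit_inv Hx) (unit_inv Hy)).
Qed.

Lemma real_part_mul x y : H x -> H y ->
  real_part (trop_mul x y) = real_part x + real_part y.
Proof.
move=> Hx Hy; rewrite /real_part inv_mul //.
by rewrite (crit_weight_mul (unit_inv Hx) (unit_inv Hy)) mulrDl.
Qed.

Lemma perm_part_scale r x : H x -> perm_part (trop_scale r x) = perm_part x.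
Proof. by move=> Hx; rewrite /perm_part inv_scale // crit_perm_scale. Qed.

Lemma real_part_scale r x : H x -> real_part (trop_scale r x) = real_part x + r.
Proof.
move=> Hx; rewrite /real_part inv_scale // crit_weight_scale mulrDl.
by rewrite -[r *+ _]mulr_natr mulfK.
Qed.

Lemma perm_part_id : perm_part E = 1%g.
Proof. by rewrite /perm_part inv_id crit_perm_id. Qed.

Lemma real_part_id : real_part E = 0.
Proof. by rewrite /real_part inv_id crit_weight_id // mul0r. Qed.

Lemma parts_inj x y : H x -> H y ->
  perm_part x = perm_part y -> real_part x = real_part y -> x = y.
Proof.
move=> Hx Hy eq_perm eq_real; have [HVy [yV Vy]] := Hinv Hy.
have Hz := Hmul Hx HVy.
suff xVy : trop_mul x (inv y) = E.
  by rewrite -[LHS](Hid Hx).2 -Vy -trop_mulA xVy (Hid Hy).1.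
apply: (trop_unit_kernel (Ordinal n_gt0) (unit_inv Hz)).
  rewrite -/(perm_part _) perm_part_mul // eq_perm -perm_part_mul //.
  by rewrite yV perm_part_id.
have : real_part (trop_mul x (inv y)) = 0.
  by rewrite real_part_mul // eq_real -real_part_mul // yV real_part_id.
by move/eqP; rewrite mulf_eq0 invr_eq0 (negbTE crit_reps_neq0) orbF => /eqP.
Qed.

Definition perm_image : {set {perm 'I_n}} :=
  [set s | excluded_middle_informative (exists2 x, H x & perm_part x = s)].

Lemma perm_imageP s :
  reflect (exists2 x, H x & perm_part x = s) (s \in perm_image).
Proof. by rewrite inE; apply: sumboolP. Qed.

Lemma perm_image_group : group_set perm_image.
Proof.
apply/group_setP; split; first by apply/perm_imageP; exists E; rewrite ?perm_part_id.
move=> _ _ /perm_imageP[x Hx <-] /perm_imageP[y Hy <-]; apply/perm_imageP.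
by exists (trop_mul x y); [exact: Hmul | rewrite perm_part_mul].
Qed.

Lemma trop_subgroup_iso :
  exists (Sigma : {group {perm 'I_n}}) (phi : 'M[R]_n -> R * {perm 'I_n}),
    (forall x, H x -> (phi x).2 \in Sigma) /\
    (forall x y, H x -> H y ->
       phi (trop_mul x y) = ((phi x).1 + (phi y).1, ((phi x).2 * (phi y).2)%g)) /\
    (forall x y, H x -> H y -> phi x = phi y -> x = y) /\
    (forall (r : R) (s : {perm 'I_n}), s \in Sigma -> exists x, H x /\ phi x = (r, s)).
Proof.
exists (Group perm_image_group), (fun x => (real_part x, perm_part x)).
split; [|split; [|split]].
- by move=> x Hx; apply/perm_imageP; exists x.
- by move=> x y Hx Hy; rewrite real_part_mul ?perm_part_mul.
- by move=> x y Hx Hy [eq_real eq_perm]; apply: parts_inj.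
- move=> r s /perm_imageP[x Hx <-]; exists (trop_scale (r - real_part x) x).
  split; first exact: Hscale.
  by rewrite real_part_scale ?perm_part_scale // addrC subrK.
Qed.

End ShiftClosedSubgroup.

Lemma maximal_trop_subgroup_scale n (H : 'M[R]_n -> Prop) r x :
  is_maximal_trop_subgroup H -> H x -> H (trop_scale r x).
Proof.
case=> [[Hmul [E [HE [Hid Hinv]]]] Hmax] Hx.
apply: (Hmax (fun z => exists r y, H y /\ z = trop_scale r y)); last by exists r, x.
  split.
    move=> _ _ [r1 [y1 [Hy1 ->]]] [r2 [y2 [Hy2 ->]]].
    rewrite trop_mul_scalel trop_mul_scaler trop_scaleA.
    by exists (r1 + r2)%R, (trop_mul y1 y2); split; first exact: Hmul.
  exists E; split; first by exists 0%R, E; rewrite trop_scale0.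
  split=> _ [r1 [y1 [Hy1 ->]]].
    by rewrite trop_mul_scalel trop_mul_scaler; have [-> ->] := Hid _ Hy1.
  have [y' [Hy' [yy' y'y]]] := Hinv _ Hy1.
  exists (trop_scale (- r1) y'); split; first by exists (- r1)%R, y'.
  by rewrite !trop_mul_scalel !trop_mul_scaler yy' y'y trop_scaleKN trop_scaleNK.
by move=> z Hz; exists 0%R, z; rewrite trop_scale0.
Qed.

Theorem corollary7p10 (n : nat) (Hn : (0 < n)%N) (H : 'M[R]_n -> Prop) :
  is_maximal_trop_subgroup H ->
  exists (Sigma : {group {perm 'I_n}}) (phi : 'M[R]_n -> R * {perm 'I_n}),
    (forall x, H x -> (phi x).2 \in Sigma) /\
    (forall x y, H x -> H y ->
       phi (trop_mul x y) = ((phi x).1 + (phi y).1, ((phi x).2 * (phi y).2)%g)) /\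
    (forall x y, H x -> H y -> phi x = phi y -> x = y) /\
    (forall (r : R) (s : {perm 'I_n}), s \in Sigma -> exists x, H x /\ phi x = (r, s)).
Proof.
move=> maxH; have [[Hmul [E [HE [Hid Hinv]]]] _] := maxH.
have [inv invP] : exists inv : 'M[R]_n -> 'M[R]_n, forall x, H x ->
    H (inv x) /\ trop_mul x (inv x) = E /\ trop_mul (inv x) x = E.
  apply: (choice (fun x y => H x -> H y /\ trop_mul x y = E /\ trop_mul y x = E)) => x.
  by case: (excluded_middle_informative (H x)) => [/Hinv[y]|]; [exists y | exists x].
apply: (trop_subgroup_iso Hn HE Hmul Hid invP) => r x.
exact: maximal_trop_subgroup_scale.
Qed.
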